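(* Let $n\ge 1$ and let $G=P_{n+1}$ be the path $v_1v_2\cdots v_{n+1}$ whose edges $v_iv_{i+1}$ have pairwise distinct weights $w_i\in(0,1)$, $1\le i\le n$. For $1\le i\le n$ let $W_i=\prod_{j\ne i}(w_j-w_i)$. Then for every integer $t\ge n$, \[\Pr\big(\operatorname{ptw}(G,\{v_1\})\le t\big)=w_1w_2\cdots w_n\sum_{i=1}^{n}\frac{(1-w_i)^{n-1}-(1-w_i)^{t}}{w_iW_i},\] and hence, for $\alpha\in(0,1)$, $\operatorname{cptw}(G,\{v_1\},\alpha)$ is the minimum value of $t$ for which this quantity is at least $\alpha$.
   Context: Let $G$ be a finite simple graph in which each edge $uv$ has a weight $w_{uv}\in(0,1)$. Weighted zero forcing: start with a set $B\subseteq V(G)$ of blue vertices, all other vertices white. In each round, simultaneously, for every blue vertex $u$ that has exactly one white neighbor $v$ (with respect to the coloring at the start of the round), $u$ attempts to force $v$, succeeding with probability $w_{uv}$, all attempts being independent; a white vertex becomes blue at the end of the round if at least one attempt on it succeeds. $\operatorname{ptw}(G,B)$ is the random variable giving the round in which the last white vertex becomes blue ($0$ if $B=V(G)$). For $\alpha\in(0,1)$, $\operatorname{cptw}(G,B,\alpha)$ is the least $t\ge 0$ with $\Pr(\operatorname{ptw}(G,B)\le t)\ge\alpha$. *)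

From HB Require Import structures.
From mathcomp Require Import all_boot all_order all_algebra.
Set Implicit Arguments. Unset Strict Implicit. Unset Printing Implicit Defensive.
Import Order.TTheory GRing.Theory Num.Theory.
Local Open Scope ring_scope.

(* Weighted zero forcing on a finite simple graph given by a symmetric,
   irreflexive relation [adj] on a finType [T], with edge weights [w u v]
   (only queried on edges).  The coloring process is a Markov chain on the
   set of blue vertices; [wzf_dist t S] is the probability that the set of
   blue vertices after t rounds is exactly S. *)
Section WZF.
Variables (R : realFieldType) (T : finType) (adj : rel T) (w : T -> T -> R).

Definition white_nbrs (S : {set T}) (u : T) : {set T} :=
  [set x | adj u x & x \notin S].

Definition forces (S : {set T}) (u v : T) : bool :=
  (u \in S) && (white_nbrs S u == [set v]).

(* probability that at least one attempt on v succeeds *)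
Definition pforce (S : {set T}) (v : T) : R :=
  1 - \prod_(u | forces S u v) (1 - w u v).

Definition wzf_trans (S S' : {set T}) : R :=
  if S \subset S' then
    \prod_(v | v \notin S) (if v \in S' then pforce S v else 1 - pforce S v)
  else 0.

Fixpoint wzf_dist (B : {set T}) (t : nat) : {ffun {set T} -> R} :=
  match t with
  | 0 => [ffun S => (S == B)%:R]
  | t'.+1 => [ffun S' => \sum_(S : {set T}) wzf_dist B t' S * wzf_trans S S']
  end.

Definition prob_ptw_le (B : {set T}) (t : nat) : R := wzf_dist B t setT.

Definition is_cptw (B : {set T}) (alpha : R) (t : nat) : Prop :=
  alpha <= prob_ptw_le B t /\ (forall s, (s < t)%N -> prob_ptw_le B s < alpha).

End WZF.

(* The path P_{n+1} on vertices 'I_n.+1 (vertex v_k is the ordinal k-1). *)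
Definition path_adj (n : nat) : rel 'I_n.+1 :=
  fun u v => (u.+1 == v :> nat) || (v.+1 == u :> nat).

(* edge weights: the edge v_{i+1} v_{i+2} (ordinals i, i+1) gets weight w i,
   for i : 'I_n ; the value on non-edges is irrelevant (0). *)
Definition path_w (R : nzRingType) (n : nat) (w : 'I_n -> R) (u v : 'I_n.+1) : R :=
  if path_adj u v then
    match @insub nat (fun k => k < n)%N _ (minn u v) with
    | Some i => w i | None => 0 end
  else 0.

Definition path_formula (R : realFieldType) (n : nat) (w : 'I_n -> R) (t : nat) : R :=
  (\prod_(i < n) w i) *
  \sum_(i < n) (((1 - w i) ^+ n.-1 - (1 - w i) ^+ t) /
                (w i * \prod_(j < n | j != i) (w j - w i))).

From mathcomp Require Import all_boot all_order all_algebra.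
From mathcomp Require Import zify ring.
Import Order.TTheory GRing.Theory Num.Theory.
Local Open Scope ring_scope.
Set Implicit Arguments. Unset Strict Implicit. Unset Printing Implicit Defensive.

(* Starting from {v_1}, the blue set is always a prefix v_1..v_{k+1}, and
   from such a prefix only v_{k+1} can force, onto v_{k+2}, succeeding with
   probability w_{k+1}.  Hence the coloring process is the pure-birth chain
   that moves from state k to k+1 with probability w_{k+1}, and
   Pr(ptw <= t) is the probability that this chain has reached state n. *)

(* Partial-fraction identity behind Lagrange interpolation: for k+1 >= 2
   distinct nodes x_0..x_k, \sum_i 1 / \prod_(j != i) (x_i - x_j) = 0.  The sum
   is the leading coefficient of the interpolant of the constant 1, which has
   degree at most k and hence equals 1. *)
Lemma lagrange_weights_sum0 (F : fieldType) (k : nat) (x : 'I_k.+1 -> F) :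
  (0 < k)%N -> injective x ->
  \sum_(i < k.+1) (\prod_(j < k.+1 | j != i) (x i - x j))^-1 = 0.
Proof.
move=> k_gt0 x_inj.
pose Q (i : 'I_k.+1) : {poly F} := \prod_(j < k.+1 | j != i) ('X - (x j)%:P).
pose P : {poly F} :=
  \sum_(i < k.+1) (\prod_(j < k.+1 | j != i) (x i - x j))^-1 *: Q i.
have sizeQ i : size (Q i) = k.+1.
  rewrite /Q size_prod; last by move=> j _; rewrite polyXsubC_eq0.
  under eq_bigr => j _ do rewrite size_XsubC.
  by rewrite sum_nat_const cardC1 card_ord /=; lia.
have lcQ i : (Q i)`_k = 1.
  have := lead_coef_prod_XsubC (index_enum 'I_k.+1) (fun j => j != i) x.
  by rewrite /lead_coef -/(Q i) sizeQ.
have P_nodes l : P.[x l] = 1.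
  rewrite /P horner_sum (bigD1 l) //= [X in _ + X]big1 ?addr0 => [|i il].
    rewrite hornerZ /Q horner_prod.
    rewrite [X in _ * X](eq_bigr (fun j => x l - x j)) => [|j _]; last first.
      exact: hornerXsubC.
    rewrite mulVf // prodf_seq_neq0; apply/allP => j _; apply/implyP => jl.
    by rewrite subr_eq0 (inj_eq x_inj) eq_sym.
  rewrite hornerZ /Q horner_prod [X in _ * X](bigD1 l) 1?eq_sym //=.
  by rewrite hornerXsubC subrr mul0r mulr0.
have P_eq1 : P - 1 = 0.
  apply: (@roots_geq_poly_eq0 _ _ [seq x i | i <- enum 'I_k.+1]).
  - by apply/allP => y /mapP [l _ ->]; rewrite rootE !hornerE P_nodes subrr.
  - by rewrite map_inj_uniq ?enum_uniq.
  - rewrite size_map size_enum_ord; apply: (leq_trans (size_polyD _ _)).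
    rewrite size_polyN size_poly1 geq_max ltn0Sn andbT.
    apply: (leq_trans (size_sum _ _ _)); apply/bigmax_leqP => i _.
    by apply: (leq_trans (size_scale_leq _ _)); rewrite sizeQ.
have := congr1 (fun p : {poly F} => p`_k) P_eq1.
rewrite /= coefB coef1 (negbTE (lt0n_neq0 k_gt0)) subr0 coef0 /P coef_sum.
by move=> coef_k; rewrite -[RHS]coef_k; apply: eq_bigr => i _; rewrite coefZ lcQ mulr1.
Qed.

(* Divided differences of the powers z^t at nodes x_0, x_1, ... of a field:
   [divdiff x k t] is the divided difference of z |-> z^t at x_0..x_k, written
   in its Lagrange form. *)
Section DividedDifferences.
Variables (F : fieldType) (x : nat -> F) (N : nat).
Hypothesis x_inj : forall i j, (i < N)%N -> (j < N)%N -> x i = x j -> i = j.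

Definition node_prod (k i : nat) : F := \prod_(j < k.+1 | j != i :> nat) (x i - x j).

Definition divdiff (k t : nat) : F := \sum_(i < k.+1) x i ^+ t / node_prod k i.

Lemma node_diff_neq0 (i j : nat) : (i < N)%N -> (j < N)%N -> i != j -> x i - x j != 0.
Proof. by move=> iN jN; apply: contra; rewrite subr_eq0 => /eqP/(x_inj iN jN)->. Qed.

Lemma node_prod_neq0 (k : nat) (i : 'I_k.+1) : (k < N)%N -> node_prod k i != 0.
Proof.
move=> kN; rewrite prodf_seq_neq0; apply/allP => j _; apply/implyP => ji.
by apply: node_diff_neq0; rewrite 1?eq_sym // (leq_trans _ kN) ?ltn_ord.
Qed.

Lemma node_prodS (k : nat) (i : 'I_k.+1) :
  node_prod k.+1 i = node_prod k i * (x i - x k.+1).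
Proof.
rewrite /node_prod big_mkcond big_ord_recr /= -big_mkcond /=.
by rewrite neq_ltn ltn_ord orbT.
Qed.

Lemma divdiff_single (t : nat) : divdiff 0 t = x 0 ^+ t.
Proof. by rewrite /divdiff big_ord1 /node_prod big_pred0 ?divr1 // => j; rewrite ord1. Qed.

Lemma divdiffS (k t : nat) : (k.+1 < N)%N ->
  divdiff k.+1 t.+1 = x k.+1 * divdiff k.+1 t + divdiff k t.
Proof.
move=> kN; apply/eqP; rewrite addrC -subr_eq; apply/eqP.
rewrite /divdiff mulr_sumr -sumrB big_ord_recr /= exprS mulrA subrr addr0.
apply: eq_bigr => i _; rewrite node_prodS exprS.
have xi_neq : x i - x k.+1 != 0.
  by apply: node_diff_neq0; rewrite ?neq_ltn ?ltn_ord //; apply: ltn_trans kN.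
have prod_neq := node_prod_neq0 i (ltnW kN).
by field; rewrite prod_neq xi_neq.
Qed.

Lemma divdiff0 (k : nat) : (0 < k)%N -> (k < N)%N -> divdiff k 0 = 0.
Proof.
move=> k_gt0 kN; rewrite -(@lagrange_weights_sum0 _ k (fun i => x i)) //.
  by apply: eq_bigr => i _; rewrite expr0 div1r.
move=> i j /x_inj eq_ij; apply: val_inj; apply: eq_ij; apply: leq_trans kN; exact: ltn_ord.
Qed.

End DividedDifferences.

Lemma geometric_sum (F : comNzRingType) (z : F) (a b : nat) : (a <= b)%N ->
  (1 - z) * \sum_(a <= s < b) z ^+ s = z ^+ a - z ^+ b.
Proof.
move=> ab; rewrite mulr_sumr (telescope_sumr_eq (fun s => - z ^+ s) _ ab).
  by rewrite opprK addrC.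
by move=> s _; rewrite exprS; ring.
Qed.

(* A pure-birth chain on the states 0, 1, 2, ...: in each step the chain moves
   from k to k+1 with probability a_k and stays put otherwise.
   [birth t k] is the probability of being in state k after t steps. *)
Section BirthChain.
Variables (F : fieldType) (a : nat -> F).

Fixpoint birth (t k : nat) : F :=
  match t with
  | 0 => (k == 0)%:R
  | t'.+1 => (1 - a k) * birth t' k + (if k is k'.+1 then a k' * birth t' k' else 0)
  end.

Lemma birth_lt (t k : nat) : (t < k)%N -> birth t k = 0.
Proof.
elim: t k => [|t IH] [|k] //= tk.
by rewrite !IH ?mulr0 ?addr0 // ltnW.
Qed.

Lemma birth_divdiff (N : nat) :
  (forall i j, (i < N)%N -> (j < N)%N -> 1 - a i = 1 - a j -> i = j) ->
  forall t k, (k < N)%N ->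
  birth t k = (\prod_(i < k) a i) * divdiff (fun i => 1 - a i) k t.
Proof.
move=> q_inj; elim=> [|t IH] [|k] kN /=.
- by rewrite big_ord0 mul1r divdiff_single.
- by rewrite (divdiff0 q_inj) ?mulr0.
- by rewrite IH // big_ord0 !mul1r !divdiff_single exprS addr0.
- rewrite (divdiffS q_inj) // !IH ?(ltnW kN) // big_ord_recr /=; ring.
Qed.

Lemma birth_absorbing (t k : nat) : a k.+1 = 0 ->
  birth t k.+1 = \sum_(s < t) a k * birth s k.
Proof.
move=> ak0; elim: t => [|t IH] /=; first by rewrite big_ord0.
by rewrite big_ord_recr /= -IH ak0 subr0 mul1r.
Qed.

End BirthChain.

Section OneRound.
Variables (R : realFieldType) (T : finType) (adj : rel T) (w : T -> T -> R).

Local Notation trans := (wzf_trans adj w).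
Local Notation pf := (pforce adj w).

Lemma wzf_trans_setT (S' : {set T}) : trans setT S' = (S' == setT)%:R.
Proof.
rewrite /wzf_trans subTset big_pred0 => [|v]; last by rewrite in_setT.
by case: (S' == setT).
Qed.

Lemma wzf_trans_single (S S' : {set T}) (j : T) : j \notin S ->
  (forall v, v \notin S -> v != j -> pf S v = 0) ->
  trans S S' = (S' == S)%:R * (1 - pf S j) + (S' == j |: S)%:R * pf S j.
Proof.
move=> jS pf0; have jS1 : (S == j |: S) = false.
  by apply: contraNF jS => /eqP ->; rewrite setU11.
rewrite /wzf_trans (bigD1 j jS) /=.
have others_white (X : {set T}) : (forall v, v \notin S -> v != j -> v \notin X) ->
    \prod_(v | (v \notin S) && (v != j)) (if v \in X then pf S v else 1 - pf S v) = 1.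
  by move=> Xw; apply: big1 => v /andP [vS vj]; rewrite (negbTE (Xw v vS vj)) pf0 ?subr0.
have [->|S'S] := eqVneq S' S.
  by rewrite subxx (negbTE jS) others_white // jS1 /=; ring.
have [->|S'jS] := eqVneq S' (j |: S).
  rewrite subsetUr setU11 others_white ?eqxx 1?eq_sym ?jS1 /=; first by ring.
  by move=> v vS vj; rewrite in_setU1 negb_or vj.
rewrite /= !mul0r addr0; case: ifP => // SS'.
(* Otherwise S' contains a white vertex v != j, and its factor pforce S v
   vanishes: S c= S' c= j |: S would force S' to be S or j |: S. *)
case: (boolP [exists v, [&& v \in S', v \notin S & v != j]]) => [|none].
  case/existsP => v /and3P [vS' vS vj].
  by rewrite (bigD1 v) /= ?vS ?vj // vS' (pf0 v vS vj) mul0r mulr0.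
have S'jS_sub : S' \subset j |: S.
  apply/subsetP => v vS'; move/existsPn: none => /(_ v).
  by rewrite vS' in_setU1 /= negb_and !negbK orbC => /orP [/eqP ->|->]; rewrite ?eqxx ?orbT.
case: (boolP (j \in S')) => jS'.
  by case/eqP: S'jS; apply/eqP; rewrite eqEsubset S'jS_sub subUset sub1set jS'.
case/eqP: S'S; apply/eqP; rewrite eqEsubset SS' andbT; apply/subsetP => v vS'.
have := subsetP S'jS_sub v vS'; rewrite in_setU1 => /orP [/eqP vj|//].
by move: jS'; rewrite -vj vS'.
Qed.
End OneRound.

Section PathForcing.
Variables (R : realFieldType) (n : nat) (w : 'I_n -> R).

Local Notation adj := (@path_adj n).
Local Notation pw := (path_w w).

(* the weight of the edge leaving v_{k+1}, and 0 at the last vertex and beyond *)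
Definition wext (k : nat) : R := if insub k is Some i then w i else 0.

Lemma wext_ord (i : 'I_n) : wext i = w i.
Proof. by rewrite /wext valK. Qed.

Lemma wext_ge (k : nat) : (n <= k)%N -> wext k = 0.
Proof. by move=> nk; rewrite /wext insubF // ltnNge nk. Qed.

Lemma path_wE (u v : 'I_n.+1) : pw u v = if adj u v then wext (minn u v) else 0.
Proof. by []. Qed.

(* the blue set after k successful forces *)
Definition prefix (k : nat) : {set 'I_n.+1} := [set x : 'I_n.+1 | (x <= k)%N].

Lemma prefix_ge (k : nat) : (n <= k)%N -> prefix k = setT.
Proof. by move=> nk; apply/setP => x; rewrite !inE; have := ltn_ord x; lia. Qed.

Lemma prefix0 : prefix 0 = [set ord0].
Proof. by apply/setP => x; rewrite !inE leqn0. Qed.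

Lemma prefix_neqT (k : nat) : (k < n)%N -> (setT == prefix k) = false.
Proof.
move=> kn; apply/negP => /eqP prefT.
have : Ordinal (kn : (k.+1 < n.+1)%N) \in prefix k by rewrite -prefT in_setT.
by rewrite inE /= ltnn.
Qed.

Lemma forces_prefix (k : nat) (u v : 'I_n.+1) : (k < v)%N ->
  forces adj (prefix k) u v = (u == k :> nat) && (v == k.+1 :> nat).
Proof.
move=> kv; rewrite /forces inE.
case: (leqP u k) => uk /=; last by have -> : (u == k :> nat) = false by lia.
have -> : white_nbrs adj (prefix k) u =
          [set x : 'I_n.+1 | (u == k :> nat) && (x == k.+1 :> nat)].
  by apply/setP => x; rewrite !inE /path_adj; lia.
apply/eqP/idP => [/setP/(_ v)|/andP [/eqP uk1 /eqP vk1]].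
  by rewrite !inE eqxx.
by apply/setP => x; rewrite !inE uk1 eqxx -val_eqE /= vk1.
Qed.

Lemma pforce_prefix (k : nat) (v : 'I_n.+1) : (k < v)%N ->
  pforce adj pw (prefix k) v = if (v == k.+1 :> nat) then wext k else 0.
Proof.
move=> kv; rewrite /pforce.
case: (eqVneq (v : nat) k.+1) => vk1; last first.
  by rewrite big_pred0 ?subrr // => u; rewrite forces_prefix // (negbTE vk1) andbF.
have kn : (k < n.+1)%N by have := ltn_ord v; lia.
rewrite (big_pred1 (Ordinal kn)) => [|u]; last by rewrite forces_prefix // vk1 eqxx andbT.
rewrite path_wE /path_adj /= vk1 eqxx /= (_ : minn k k.+1 = k); [ring | lia].
Qed.

Lemma wzf_trans_prefix (k : nat) (S' : {set 'I_n.+1}) : (k <= n)%N ->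
  wzf_trans adj pw (prefix k) S' =
  (S' == prefix k)%:R * (1 - wext k) + (S' == prefix k.+1)%:R * wext k.
Proof.
rewrite leq_eqVlt => /orP [/eqP ->|kn].
  rewrite !prefix_ge // wzf_trans_setT wext_ge //.
  by case: (S' == setT); rewrite /=; ring.
pose j : 'I_n.+1 := Ordinal (kn : (k.+1 < n.+1)%N).
have jk : j \notin prefix k by rewrite inE /= ltnn.
have -> : prefix k.+1 = j |: prefix k.
  by apply/setP => x; rewrite !inE -val_eqE /=; lia.
have pf_j : pforce adj pw (prefix k) j = wext k.
  by rewrite pforce_prefix //= eqxx.
rewrite (wzf_trans_single S' jk) ?pf_j // => v vk vj.
rewrite pforce_prefix; last by move: vk; rewrite inE -ltnNge.
by rewrite -val_eqE in vj; rewrite (negbTE vj).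
Qed.

Lemma wzf_dist_prefix (t : nat) (S : {set 'I_n.+1}) :
  wzf_dist adj pw [set ord0] t S = \sum_(k < n.+1) (S == prefix k)%:R * birth wext t k.
Proof.
elim: t S => [|t IH] S /=.
  rewrite ffunE big_ord_recl /= prefix0 mulr1 big1 ?addr0 // => i _.
  by rewrite mulr0.
rewrite ffunE.
under eq_bigr => S0 _ do rewrite IH mulr_suml.
rewrite exchange_big /=.
have collapse (k : 'I_n.+1) :
    \sum_S0 (S0 == prefix k)%:R * birth wext t k * wzf_trans adj pw S0 S =
    birth wext t k * wzf_trans adj pw (prefix k) S.
  rewrite (bigD1 (prefix k)) //= eqxx mul1r big1 ?addr0 // => S1 /negbTE ->.
  by rewrite !mul0r.
under eq_bigr => k _ do rewrite collapse (wzf_trans_prefix _ (ltn_ord k)) mulrDr.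
rewrite big_split /= big_ord_recl big_ord_recr /= (wext_ge (leqnn n)) !mulr0 addr0.
rewrite big_ord_recl /= -addrA -big_split /=; congr (_ + _); first by ring.
by apply: eq_bigr => i _; rewrite /bump leq0n add1n add0n; ring.
Qed.

Lemma prob_ptw_birth (t : nat) :
  prob_ptw_le adj pw [set ord0] t = birth wext t n.
Proof.
rewrite /prob_ptw_le wzf_dist_prefix big_ord_recr /= big1 ?add0r.
  by rewrite prefix_ge // eqxx mul1r.
by move=> i _; rewrite prefix_neqT ?mul0r.
Qed.

End PathForcing.

Section PathFormula.
Variables (R : realFieldType) (n : nat) (w : 'I_n.+1 -> R).
Hypotheses (w_inj : injective w) (w_neq0 : forall i, w i != 0).

Lemma stay_inj (i j : nat) : (i < n.+1)%N -> (j < n.+1)%N ->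
  1 - wext w i = 1 - wext w j -> i = j.
Proof.
move=> iN jN /addrI/oppr_inj.
rewrite -[i]/(nat_of_ord (Ordinal iN)) -[j]/(nat_of_ord (Ordinal jN)) !wext_ord.
by move/w_inj/(congr1 val).
Qed.

Lemma birth_path_formula (t : nat) : (n < t)%N ->
  birth (wext w) t n.+1 = path_formula w t.
Proof.
move=> nt; rewrite (birth_absorbing t (wext_ge w (leqnn n.+1))).
rewrite -(big_mkord xpredT (fun s => wext w n * birth (wext w) s n)).
rewrite (@big_cat_nat _ _ _ n) ?(ltnW nt) //=.
rewrite big_nat_cond big1 ?add0r => [|s /andP [/andP [_ sn] _]]; last first.
  by rewrite birth_lt ?mulr0.
under eq_bigr => s _ do rewrite (birth_divdiff stay_inj s (ltnSn n)) mulrA.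
rewrite -mulr_sumr /path_formula /=.
have -> : \prod_(i < n.+1) w i = wext w n * \prod_(i < n) wext w i.
  rewrite big_ord_recr mulrC /= -(wext_ord w ord_max); congr (_ * _).
  by apply: eq_bigr => i _; rewrite -(wext_ord w (widen_ord _ i)).
congr (_ * _); rewrite exchange_big /=; apply: eq_bigr => i _.
rewrite -mulr_suml wext_ord.
have geometric : \sum_(n <= s < t) (1 - w i) ^+ s = ((1 - w i) ^+ n - (1 - w i) ^+ t) / w i.
  rewrite -(geometric_sum _ (ltnW nt)) (_ : 1 - (1 - w i) = w i); last by ring.
  by rewrite mulrAC divff ?mul1r.
have -> : node_prod (fun k => 1 - wext w k) n i = \prod_(j < n.+1 | j != i) (w j - w i).
  by apply: eq_bigr => j _; rewrite !wext_ord; ring.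
by rewrite geometric invfM mulrA.
Qed.
End PathFormula.

Lemma is_cptw_from (R : realFieldType) (T : finType) (adj : rel T) (w : T -> T -> R)
    (B : {set T}) (alpha : R) (m : nat) (f : nat -> R) :
  0 < alpha ->
  (forall t, (t < m)%N -> prob_ptw_le adj w B t = 0) ->
  (forall t, (m <= t)%N -> prob_ptw_le adj w B t = f t) ->
  forall t, is_cptw adj w B alpha t <->
    [/\ (m <= t)%N, alpha <= f t & forall s, (m <= s < t)%N -> f s < alpha].
Proof.
move=> alpha_gt0 early late t; split.
  case=> reached before; have mt : (m <= t)%N.
    by rewrite leqNgt; apply: contraL reached => /early ->; rewrite -ltNge.
  split; rewrite -?late //.
  by move=> s /andP [ms st]; rewrite -late ?before.
case=> mt reached before; split; first by rewrite late.
by move=> s st; case: (ltnP s m) => [/early -> //|ms]; rewrite late ?before ?ms.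
Qed.

Theorem mainTheorem11 (R : realFieldType) (n : nat) (w : 'I_n -> R) :
  (0 < n)%N ->
  (forall i, 0 < w i < 1) ->
  injective w ->
  (forall t : nat, (n <= t)%N ->
     prob_ptw_le (@path_adj n) (path_w w) [set ord0] t = path_formula w t) /\
  (forall alpha : R, 0 < alpha < 1 -> forall t : nat,
     is_cptw (@path_adj n) (path_w w) [set ord0] alpha t <->
     [/\ (n <= t)%N, alpha <= path_formula w t &
         forall s : nat, (n <= s < t)%N -> path_formula w s < alpha]).
Proof.
case: n w => [//|n] w _ w_range w_inj.
have w_neq0 i : w i != 0 by have /andP [w_gt0 _] := w_range i; rewrite gt_eqF.
have late t : (n < t)%N ->
    prob_ptw_le (@path_adj n.+1) (path_w w) [set ord0] t = path_formula w t.
  by move=> nt; rewrite prob_ptw_birth (birth_path_formula w_inj w_neq0 nt).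
have early t : (t < n.+1)%N ->
    prob_ptw_le (@path_adj n.+1) (path_w w) [set ord0] t = 0.
  by move=> tn; rewrite prob_ptw_birth birth_lt.
split=> // alpha /andP [alpha_gt0 _].
exact: is_cptw_from.
Qed.
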